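(* Let $F_k$ denote the Fibonacci numbers ($F_0=0$, $F_1=1$, $F_{k+2}=F_k+F_{k+1}$). For all integers $i,j$ for which all indices below are nonnegative, $\gcd(F_{i-1}+F_{j+1},\,F_i-F_j)=\gcd(F_{i-3}+F_{j+3},\,F_{i-2}-F_{j+2})$. *)

From mathcomp Require Import all_boot all_order all_algebra.
Set Implicit Arguments. Unset Strict Implicit. Unset Printing Implicit Defensive.
Import Order.TTheory GRing.Theory Num.Theory.

Fixpoint fib (k : nat) : nat :=
  match k with
  | 0 => 0
  | 1 => 1
  | (k'.+1 as k1).+1 => fib k' + fib k1
  end.

From mathcomp Require Import all_boot all_order all_algebra.
From mathcomp Require Import ring.
Import Order.TTheory GRing.Theory Num.Theory.
Local Open Scope ring_scope.

(* The right-hand pair is the image of the left-hand one under the integer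
   map (a, b) |-> (2a - b, b - a), which has determinant one and so preserves
   gcds; checking this needs only the Fibonacci recurrence. *)

Lemma gcdz_unimodular (a b : int) : gcdz a b = gcdz (2 * a - b) (b - a).
Proof.
have -> : gcdz a b = gcdz a (b - a).
  by rewrite -(gcdzMDl 1 a (b - a)) mul1r addrC subrK.
rewrite [RHS]gcdzC -(gcdzMDl 1 (b - a) (2 * a - b)) gcdzC.
by congr gcdz; ring.
Qed.

Lemma fibSSz (k : nat) : (fib k.+2)%:Z = (fib k)%:Z + (fib k.+1)%:Z.
Proof. by rewrite -PoszD. Qed.

Theorem lemma2p3p1 (i j : nat) (hi : (3 <= i)%N) :
  gcdz ((fib i.-1)%:Z + (fib j.+1)%:Z) ((fib i)%:Z - (fib j)%:Z)
  = gcdz ((fib (i - 3))%:Z + (fib j.+3)%:Z) ((fib (i - 2))%:Z - (fib j.+2)%:Z).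
Proof.
case: i hi => [|[|[|k]]] // _.
rewrite !subSS !subn0 [k.+3.-1]/= gcdz_unimodular.
by congr gcdz; rewrite !fibSSz; ring.
Qed.
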